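(* Let $\mu$ be a probability measure on $\mathbb{Z}$ and let $0<b<1/4$ and $0\le c<1$. If $|\hat{\mu}(t)|\le c$ for all $t$ with $b\le |t|<1/2$, then $$|\hat{\mu}(t)|\le 1-\frac{1-c^2}{8b^2}\,t^2\quad\text{for all } |t|\le b.$$
   Context: The Fourier transform of a probability measure $\mu$ on $\mathbb{Z}$ is $\hat{\mu}(t)=\sum_{k\in\mathbb{Z}}\mu(k)e^{2\pi ikt}$, $t\in[-1/2,1/2)$. *)

From Stdlib Require Import Reals ZArith ClassicalEpsilon.
Open Scope R_scope.

Definition Zsum_conv (f : Z -> R) (l : R) : Prop :=
  exists l1 l2,
    infinite_sum (fun n : nat => f (Z.of_nat n)) l1 /\
    infinite_sum (fun n : nat => f (- Z.of_nat (S n))%Z) l2 /\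
    l = l1 + l2.

(* The value of sum_{k in Z} f k (when it converges; limits are unique). *)
Definition Zsum (f : Z -> R) : R :=
  epsilon (inhabits 0) (Zsum_conv f).

Definition is_prob_measure (mu : Z -> R) : Prop :=
  (forall k, 0 <= mu k) /\ Zsum_conv mu 1.

(* Real and imaginary parts of hat mu (t) = sum_k mu(k) e^{2 pi i k t}. *)
Definition ft_re (mu : Z -> R) (t : R) : R :=
  Zsum (fun k => mu k * cos (2 * PI * IZR k * t)).
Definition ft_im (mu : Z -> R) (t : R) : R :=
  Zsum (fun k => mu k * sin (2 * PI * IZR k * t)).

Definition ft_abs (mu : Z -> R) (t : R) : R :=
  sqrt (ft_re mu t ^ 2 + ft_im mu t ^ 2).

(* The whole argument is the doubling inequality
     1 - |mu^(2t)| <= 4 (1 - |mu^(t)|).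
   Rotating so that mu^(t) = r >= 0 is real, it is the average against mu of
   the pointwise inequality cos 2y >= 4 cos y - 3, i.e. 2 (cos y - 1)^2 >= 0.
   Iterating it m times, where 2^m |t| is the first dyadic multiple of |t|
   reaching the window [b, 2b) in which |mu^| <= c, gives
   1 - c <= 4^m (1 - |mu^(t)|) with 4^m t^2 < 4 b^2, and 1 - c^2 <= 2 (1 - c). *)

From Stdlib Require Import Reals ZArith Lra Psatz ClassicalEpsilon.
Open Scope R_scope.

Lemma infinite_sum_ext (f g : nat -> R) (l : R) :
  (forall n, f n = g n) -> infinite_sum f l -> infinite_sum g l.
Proof.
  intros E H e He. destruct (H e He) as [N HN]. exists N. intros n Hn.
  rewrite (sum_eq g f n) by (intros; symmetry; apply E). now apply HN.
Qed.

Lemma infinite_sum_plus (f g : nat -> R) (l1 l2 : R) :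
  infinite_sum f l1 -> infinite_sum g l2 ->
  infinite_sum (fun n => f n + g n) (l1 + l2).
Proof.
  intros H1 H2 e He.
  destruct (CV_plus (sum_f_R0 f) (sum_f_R0 g) l1 l2 H1 H2 e He) as [N HN].
  exists N. intros n Hn. rewrite plus_sum. now apply HN.
Qed.

Lemma infinite_sum_scal (a : R) (f : nat -> R) (l : R) :
  infinite_sum f l -> infinite_sum (fun n => a * f n) (a * l).
Proof.
  intros H e He.
  assert (Ha : Un_cv (fun _ : nat => a) a).
  { intros e' He'. exists 0%nat. intros. unfold Rdist. rewrite Rminus_diag, Rabs_R0. lra. }
  destruct (CV_mult _ (sum_f_R0 f) _ l Ha H e He) as [N HN]. exists N. intros n Hn.
  rewrite (sum_eq _ (fun i => f i * a) n) by (intros; ring).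
  rewrite <- scal_sum. now apply HN.
Qed.

Lemma infinite_sum_le (f g : nat -> R) (l1 l2 : R) :
  (forall n, f n <= g n) -> infinite_sum f l1 -> infinite_sum g l2 -> l1 <= l2.
Proof.
  intros E H1 H2. exact (Rle_cv_lim (fun n => sum_Rle f g n (fun i _ => E i)) H1 H2).
Qed.

Lemma infinite_sum_comparison (f g : nat -> R) (l : R) :
  (forall n, 0 <= f n <= g n) -> infinite_sum g l -> exists l', infinite_sum f l'.
Proof.
  intros E H. destruct (Rseries_CV_comp f g E (exist _ l H)) as [l' Hl']. now exists l'.
Qed.

Lemma Zsum_conv_unique (f : Z -> R) (l1 l2 : R) :
  Zsum_conv f l1 -> Zsum_conv f l2 -> l1 = l2.
Proof.
  intros (a1 & b1 & H1 & H2 & ->) (a2 & b2 & H3 & H4 & ->).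
  now rewrite (uniqueness_sum _ _ _ H1 H3), (uniqueness_sum _ _ _ H2 H4).
Qed.

Lemma Zsum_eq (f : Z -> R) (l : R) : Zsum_conv f l -> Zsum f = l.
Proof.
  intros H. apply (Zsum_conv_unique f); [|exact H].
  apply (epsilon_spec (inhabits 0) (Zsum_conv f)). now exists l.
Qed.

Lemma Zsum_conv_ext (f g : Z -> R) (l : R) :
  (forall k, f k = g k) -> Zsum_conv f l -> Zsum_conv g l.
Proof.
  intros E (a & b & H1 & H2 & ->). exists a, b.
  split; [|split; [|reflexivity]]; (eapply infinite_sum_ext; [|eassumption]); intros; apply E.
Qed.

Lemma Zsum_conv_plus (f g : Z -> R) (l1 l2 : R) :
  Zsum_conv f l1 -> Zsum_conv g l2 -> Zsum_conv (fun k => f k + g k) (l1 + l2).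
Proof.
  intros (a1 & b1 & H1 & H2 & ->) (a2 & b2 & H3 & H4 & ->).
  exists (a1 + a2), (b1 + b2).
  split; [|split]; [apply infinite_sum_plus; assumption .. | ring].
Qed.

Lemma Zsum_conv_scal (a : R) (f : Z -> R) (l : R) :
  Zsum_conv f l -> Zsum_conv (fun k => a * f k) (a * l).
Proof.
  intros (a1 & b1 & H1 & H2 & ->). exists (a * a1), (a * b1).
  split; [|split]; [apply infinite_sum_scal; assumption .. | ring].
Qed.

Lemma Zsum_conv_le (f g : Z -> R) (l1 l2 : R) :
  (forall k, f k <= g k) -> Zsum_conv f l1 -> Zsum_conv g l2 -> l1 <= l2.
Proof.
  intros E (a1 & b1 & H1 & H2 & ->) (a2 & b2 & H3 & H4 & ->).
  pose proof (infinite_sum_le _ _ _ _ (fun n => E _) H1 H3).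
  pose proof (infinite_sum_le _ _ _ _ (fun n => E _) H2 H4). lra.
Qed.

Lemma Zsum_conv_comparison (f g : Z -> R) (l : R) :
  (forall k, 0 <= f k <= g k) -> Zsum_conv g l -> exists l', Zsum_conv f l'.
Proof.
  intros E (a & b & H1 & H2 & ->).
  destruct (infinite_sum_comparison _ _ _ (fun n => E _) H1) as [a' Ha].
  destruct (infinite_sum_comparison _ _ _ (fun n => E _) H2) as [b' Hb].
  now exists (a' + b'), a', b'.
Qed.

(* [f + g] lies between [0] and [2 g]; this avoids splitting [f] into its
   positive and negative parts. *)
Lemma Zsum_conv_abs_le (f g : Z -> R) (l : R) :
  (forall k, Rabs (f k) <= g k) -> Zsum_conv g l -> exists l', Zsum_conv f l'.
Proof.
  intros E H.
  assert (Hfg : forall k, 0 <= f k + g k <= 2 * g k).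
  { intros k. pose proof (E k). pose proof (Rle_abs (f k)). pose proof (Rle_abs (- f k)). rewrite Rabs_Ropp in *. split; nra. }
  destruct (Zsum_conv_comparison _ _ _ Hfg (Zsum_conv_scal 2 _ _ H)) as [l' Hl'].
  exists (l' + -1 * l).
  apply (Zsum_conv_ext (fun k => f k + g k + -1 * g k)); [intros; ring|].
  now apply Zsum_conv_plus; [|apply Zsum_conv_scal].
Qed.

Lemma Zsum_conv_prob_weighted (mu g : Z -> R) :
  is_prob_measure mu -> (forall k, Rabs (g k) <= 1) ->
  Zsum_conv (fun k => mu k * g k) (Zsum (fun k => mu k * g k)).
Proof.
  intros [Hpos Hmu] Hg.
  destruct (Zsum_conv_abs_le (fun k => mu k * g k) mu 1) as [l Hl]; [|exact Hmu|].
  - intros k. rewrite Rabs_mult, (Rabs_right (mu k)) by (apply Rle_ge, Hpos).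
    pose proof (Hpos k). pose proof (Hg k). nra.
  - now rewrite (Zsum_eq _ _ Hl).
Qed.

Lemma ft_dot_conv (mu : Z -> R) (t u v : R) :
  is_prob_measure mu ->
  Zsum_conv (fun k => mu k * (u * cos (2 * PI * IZR k * t) + v * sin (2 * PI * IZR k * t)))
            (u * ft_re mu t + v * ft_im mu t).
Proof.
  intros Hm.
  assert (Hcos : Zsum_conv (fun k => mu k * cos (2 * PI * IZR k * t)) (ft_re mu t))
    by (apply Zsum_conv_prob_weighted; [exact Hm | intros; apply Rabs_le, COS_bound]).
  assert (Hsin : Zsum_conv (fun k => mu k * sin (2 * PI * IZR k * t)) (ft_im mu t))
    by (apply Zsum_conv_prob_weighted; [exact Hm | intros; apply Rabs_le, SIN_bound]).
  apply (Zsum_conv_ext (fun k => u * (mu k * cos (2 * PI * IZR k * t))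
                               + v * (mu k * sin (2 * PI * IZR k * t)))); [intros; ring|].
  now apply Zsum_conv_plus; apply Zsum_conv_scal.
Qed.

Lemma dot_le_norm (u v p q : R) :
  u ^ 2 + v ^ 2 = 1 -> u * p + v * q <= sqrt (p ^ 2 + q ^ 2).
Proof.
  intros H. destruct (Rle_or_lt (u * p + v * q) 0) as [Hn|Hp].
  - pose proof (sqrt_pos (p ^ 2 + q ^ 2)). lra.
  - rewrite <- (sqrt_pow2 (u * p + v * q)) by lra. apply sqrt_le_1_alt.
    pose proof (pow2_ge_0 (u * q - v * p)). nra.
Qed.

Lemma unit_vector_attaining_norm (p q : R) :
  exists u v, u ^ 2 + v ^ 2 = 1 /\ u * p + v * q = sqrt (p ^ 2 + q ^ 2).
Proof.
  set (r := sqrt (p ^ 2 + q ^ 2)).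
  assert (Hr2 : r * r = p ^ 2 + q ^ 2) by (apply sqrt_sqrt; nra).
  destruct (Req_dec r 0) as [Hr0|Hr0].
  - exists 1, 0. rewrite Hr0 in *. split; nra.
  - exists (p / r), (q / r). split; field_simplify; try lra; rewrite <- Hr2; field; lra.
Qed.

Lemma cos_double_minorant (u v x : R) :
  u ^ 2 + v ^ 2 = 1 ->
  4 * (u * cos x + v * sin x) - 3 <= (u ^ 2 - v ^ 2) * cos (2 * x) + 2 * u * v * sin (2 * x).
Proof.
  intros Huv. rewrite cos_2a, sin_2a. pose proof (sin2_cos2 x) as Hsc. unfold Rsqr in Hsc.
  assert (E : (u ^ 2 - v ^ 2) * (cos x * cos x - sin x * sin x) + 2 * u * v * (2 * sin x * cos x)
              = 2 * (u * cos x + v * sin x) ^ 2 - (u ^ 2 + v ^ 2) * (sin x * sin x + cos x * cos x))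
    by ring.
  rewrite E, Huv, Hsc. pose proof (pow2_ge_0 (u * cos x + v * sin x - 1)). nra.
Qed.

Lemma ft_abs_double (mu : Z -> R) (t : R) :
  is_prob_measure mu -> 4 * ft_abs mu t - 3 <= ft_abs mu (2 * t).
Proof.
  intros Hm.
  destruct (unit_vector_attaining_norm (ft_re mu t) (ft_im mu t)) as (u & v & Huv & Hnorm).
  assert (Hrot : (u ^ 2 - v ^ 2) ^ 2 + (2 * u * v) ^ 2 = 1)
    by (replace 1 with ((u ^ 2 + v ^ 2) ^ 2) by (rewrite Huv; ring); ring).
  assert (Havg : 4 * (u * ft_re mu t + v * ft_im mu t) + -3 * 1
                 <= (u ^ 2 - v ^ 2) * ft_re mu (2 * t) + 2 * u * v * ft_im mu (2 * t)).
  { refine (Zsum_conv_le _ _ _ _ _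
              (Zsum_conv_plus _ _ _ _ (Zsum_conv_scal 4 _ _ (ft_dot_conv mu t u v Hm))
                                       (Zsum_conv_scal (-3) _ _ (proj2 Hm)))
              (ft_dot_conv mu (2 * t) _ _ Hm)).
    intros k. simpl.
    replace (2 * PI * IZR k * (2 * t)) with (2 * (2 * PI * IZR k * t)) by ring.
    pose proof (proj1 Hm k).
    pose proof (cos_double_minorant u v (2 * PI * IZR k * t) Huv). nra. }
  pose proof (dot_le_norm _ _ (ft_re mu (2 * t)) (ft_im mu (2 * t)) Hrot).
  unfold ft_abs. lra.
Qed.

Lemma doubling_iter (g : R -> R) :
  (forall t, g (2 * t) <= 4 * g t) -> forall n t, g (2 ^ n * t) <= 4 ^ n * g t.
Proof.
  intros Hdbl n t. induction n as [|n IH]; simpl.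
  - rewrite Rmult_1_l. lra.
  - rewrite Rmult_assoc. pose proof (Hdbl (2 ^ n * t)). lra.
Qed.

Lemma dyadic_window (b x : R) :
  0 < x <= b -> exists m, b <= 2 ^ m * x < 2 * b.
Proof.
  intros Hx.
  assert (Hreach : forall n y, 0 < y <= b -> b <= 2 ^ n * y -> exists m, b <= 2 ^ m * y < 2 * b).
  { induction n as [|n IH]; intros y Hy Hn; simpl in Hn.
    - exists 0%nat. simpl. lra.
    - destruct (Rle_or_lt b y); [exists 0%nat; simpl; lra|].
      destruct (Rle_or_lt b (2 * y)).
      + exists 1%nat. simpl. lra.
      + destruct (IH (2 * y)) as [m Hm]; [lra | lra |].
        exists (S m). simpl. lra. }
  assert (H2 : Rabs 2 > 1) by (rewrite Rabs_right; lra).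
  destruct (Pow_x_infinity 2 H2 (b / x)) as [N HN].
  apply (Hreach N); [exact Hx|].
  specialize (HN N (le_n N)). rewrite Rabs_right in HN by (apply Rle_ge, pow_le; lra).
  apply Rge_le, (Rmult_le_compat_r x) in HN; [|lra].
  unfold Rdiv in HN. rewrite Rmult_assoc, Rinv_l, Rmult_1_r in HN; lra.
Qed.

(* At [t = 0] the bound needs [g 0 >= 0], which follows from [g 0 <= 4 g 0]. *)
Lemma doubling_quadratic_lower_bound (g : R -> R) (b c : R) :
  0 < b -> 0 <= c ->
  (forall t, g (2 * t) <= 4 * g t) ->
  (forall t, b <= Rabs t < 2 * b -> c <= g t) ->
  forall t, Rabs t <= b -> c * t ^ 2 <= 4 * b ^ 2 * g t.
Proof.
  intros Hb Hc Hdbl Hwin t Ht.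
  destruct (Req_dec t 0) as [->|Ht0].
  - pose proof (Hdbl 0) as H0. rewrite Rmult_0_r in H0. simpl. nra.
  - assert (Hpos : 0 < Rabs t) by now apply Rabs_pos_lt.
    destruct (dyadic_window b (Rabs t) (conj Hpos Ht)) as [m Hm].
    assert (HP : 0 < 2 ^ m) by (apply pow_lt; lra).
    assert (Hgm : c <= g (2 ^ m * t)).
    { apply Hwin. rewrite Rabs_mult, (Rabs_right (2 ^ m)) by lra. exact Hm. }
    pose proof (doubling_iter g Hdbl m t) as Hiter.
    replace (4 ^ m) with (2 ^ m * 2 ^ m) in Hiter
      by (rewrite <- Rpow_mult_distr; f_equal; ring).
    rewrite <- (pow2_abs t).
    set (P := 2 ^ m) in *. set (a := Rabs t) in *.
    assert (HPa : P * P * a ^ 2 < 4 * b ^ 2) by nra.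
    assert (HPP : 0 < P * P) by nra.
    assert (Hg : 0 <= g t).
    { destruct (Rle_or_lt 0 (g t)) as [|Hneg]; [assumption|].
      pose proof (Rmult_lt_compat_l _ _ _ HPP Hneg). lra. }
    pose proof (pow2_ge_0 a). nra.
Qed.

Theorem lemma2p1p5 (mu : Z -> R) (b c : R) :
  is_prob_measure mu ->
  0 < b < 1/4 ->
  0 <= c < 1 ->
  (forall t : R, b <= Rabs t < 1/2 -> ft_abs mu t <= c) ->
  forall t : R, Rabs t <= b ->
    ft_abs mu t <= 1 - (1 - c ^ 2) / (8 * b ^ 2) * t ^ 2.
Proof.
  intros Hm Hb Hc Hwin t Ht.
  assert (Hdouble : forall s, 1 - ft_abs mu (2 * s) <= 4 * (1 - ft_abs mu s))
    by (intros s; pose proof (ft_abs_double mu s Hm); lra).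
  assert (Hgap : forall s, b <= Rabs s < 2 * b -> 1 - c <= 1 - ft_abs mu s)
    by (intros s Hs; pose proof (Hwin s ltac:(lra)); lra).
  pose proof (doubling_quadratic_lower_bound (fun s => 1 - ft_abs mu s) b (1 - c)
                ltac:(lra) ltac:(lra) Hdouble Hgap t Ht) as Hquad.
  cbv beta in Hquad.
  assert (Hc2 : (1 - c ^ 2) * t ^ 2 <= 2 * (1 - c) * t ^ 2)
    by (apply Rmult_le_compat_r; [apply pow2_ge_0 | nra]).
  apply (Rmult_le_reg_l (8 * b ^ 2)); [nra|].
  replace (8 * b ^ 2 * (1 - (1 - c ^ 2) / (8 * b ^ 2) * t ^ 2))
    with (8 * b ^ 2 - (1 - c ^ 2) * t ^ 2) by (field; lra).
  lra.
Qed.
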